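(* Let $f:\mathbb{R}^n\to\mathbb{R}$ be a differentiable convex function, let $B'\ge B>0$, $\mathbf{x}\in[-B',B']^n$, $\mathbf{x}^*\in[-B,B]^n$ and $0<\lambda\le1$. For $i\in[n]$ define $\zeta_i=\lambda$ if $x_i=0$; $\zeta_i=0$ if $|x_i|\ge B$ and $\nabla_i f(\mathbf{x})\cdot x_i<0$; $\zeta_i=1$ otherwise; and let $i^*\in\arg\max_i\zeta_i|\nabla_i f(\mathbf{x})|$. Then at least one of the following holds: (i) $|\nabla_{i^*}f(\mathbf{x})|\ge\dfrac{f(\mathbf{x})-f(\mathbf{x}^* )}{\|\mathbf{x}^*\|_1+\lambda\|\mathbf{x}\|_1}$; (ii) $|\nabla_{i^*}f(\mathbf{x})|\ge\dfrac{f(\mathbf{x})-f(\mathbf{x}^* )}{\lambda^{-1}\|\mathbf{x}^*\|_1+\|\mathbf{x}\|_1}$ and $x_{i^*}\neq0$. *)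

From HB Require Import structures.
From mathcomp Require Import all_boot all_order all_algebra.
From mathcomp Require Import all_classical all_reals all_analysis.
Set Implicit Arguments. Unset Strict Implicit. Unset Printing Implicit Defensive.
Import Order.TTheory GRing.Theory Num.Theory.
Import numFieldNormedType.Exports.
Local Open Scope classical_set_scope.
Local Open Scope ring_scope.

Definition grad_i {R : realType} {n : nat} (f : 'rV[R]_n -> R) (x : 'rV[R]_n)
  (i : 'I_n) : R := 'D_(delta_mx 0 i) f x.

Definition l1norm {R : realType} {n : nat} (x : 'rV[R]_n) : R :=
  \sum_(i < n) `|x 0 i|.

Definition zeta {R : realType} {n : nat} (B lam : R) (f : 'rV[R]_n -> R)
  (x : 'rV[R]_n) (i : 'I_n) : R :=
  if x 0 i == 0 then lam
  else if (B <= `|x 0 i|) && (grad_i f x i * x 0 i < 0) then 0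
  else 1.

(* Convexity bounds the suboptimality gap by a first-order term,
   [f x - f x* <= sum_i (x_i - x*_i) g_i] with [g = grad f x].  Writing
   [M = zeta_{i*} |g_{i*}|], the maximality of [i*] bounds every summand by
   [M (lam^-1 |x*_i| + |x_i|)]: coordinates with [x_i = 0] have [lam |g_i| <= M];
   coordinates of weight [0] contribute a nonpositive summand since
   [|x*_i| <= B <= |x_i|] and [g_i x_i < 0]; all others have [|g_i| <= M].
   Summing gives [f x - f x* <= M (lam^-1 |x*|_1 + |x|_1)].  If [x_{i*} = 0] then
   [M = lam |g_{i*}|], which is alternative (i); otherwise [M <= |g_{i*}|],
   which is alternative (ii). *)

From HB Require Import structures.
From mathcomp Require Import all_boot all_order all_algebra.
From mathcomp Require Import all_classical all_reals all_analysis.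
From mathcomp Require Import ring lra.
Set Implicit Arguments. Unset Strict Implicit. Unset Printing Implicit Defensive.
Import Order.TTheory GRing.Theory Num.Theory.
Import numFieldNormedType.Exports.
Local Open Scope classical_set_scope.
Local Open Scope ring_scope.

Lemma convex_derive_le (R : realType) (V : normedModType R) (f : V -> R)
  (f_cvx : convex_function [set: V] f) (x y : V) :
  derivable f x (y - x) -> 'D_(y - x) f x <= f y - f x.
Proof.
move=> /cvg_ex[l fl]; rewrite /derive (cvg_lim _ fl).
have fl_right : (fun h : R => h^-1 *: ((f \o shift x) (h *: (y - x)) - f x))
    @ (0:R)^'+ --> l.
  apply: cvg_trans fl; apply: cvg_app => A.
  rewrite !nbhs_simpl /dnbhs /within /=; apply: filterS => h Ah h0.
  by apply: Ah; rewrite gt_eqF.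
apply: (cvgr_to_le fl_right); near=> h.
have h0 : 0 < h by near: h; exact: nbhs_right_gt.
have h1 : h < 1 by near: h; exact: nbhs_right_lt.
have := f_cvx (Itv01 (ltW h0) (ltW h1)) y x (in_setT y) (in_setT x).
rewrite /= /conv /= => chord.
have {}chord : f (h *: (y - x) + x) <= h * f y + (1 - h) * f x.
  suff <- : h *: y + (1 - h) *: x = h *: (y - x) + x by exact: chord.
  by rewrite scalerBl scale1r scalerBr addrA addrAC.
rewrite [X in X <= _]/GRing.scale /= mulrC ler_pdivrMr //; nra.
Unshelve. all: by end_near. Qed.

Lemma derive_rV_sum_grad (R : realType) (n : nat) (f : 'rV[R]_n -> R)
  (x v : 'rV[R]_n) :
  differentiable f x -> 'D_v f x = \sum_(i < n) v 0 i * grad_i f x i.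
Proof.
move=> fx; rewrite deriveE // {1}(row_sum_delta v) linear_sum /=.
by apply: eq_bigr => i _; rewrite linearZ /= /grad_i deriveE.
Qed.

Lemma convex_gap_le_grad_sum (R : realType) (n : nat) (f : 'rV[R]_n -> R)
  (f_cvx : convex_function [set: 'rV[R]_n] f) (x y : 'rV[R]_n) :
  differentiable f x ->
  f x - f y <= \sum_(i < n) (x 0 i - y 0 i) * grad_i f x i.
Proof.
move=> fx; have := convex_derive_le f_cvx (diff_derivable (v := y - x) fx).
rewrite derive_rV_sum_grad // => le_Df.
have -> : \sum_(i < n) (x 0 i - y 0 i) * grad_i f x i
        = - \sum_(i < n) (y - x) 0 i * grad_i f x i.
  by rewrite -sumrN; apply: eq_bigr => i _; rewrite !mxE; ring.
lra.
Qed.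

Lemma l1norm_ge0 (R : realType) (n : nat) (x : 'rV[R]_n) : 0 <= l1norm x.
Proof. exact: sumr_ge0. Qed.

Section ZetaWeights.
Variables (R : realType) (n : nat) (f : 'rV[R]_n -> R) (B lam : R) (x : 'rV[R]_n).
Hypotheses (lam_gt0 : 0 < lam) (lam_le1 : lam <= 1).
Local Notation g := (grad_i f x).
Local Notation z := (zeta B lam f x).

Lemma zeta_ge0 i : 0 <= z i.
Proof. by rewrite /zeta; case: ifP => _; [exact: ltW | case: ifP]. Qed.

Lemma zeta_le1 i : x 0 i != 0 -> z i <= 1.
Proof. by rewrite /zeta => /negbTE->; case: ifP. Qed.

Lemma zeta_grad_term_le (M : R) (y : 'rV[R]_n) i :
  `|y 0 i| <= B -> z i * `|g i| <= M -> 0 <= M ->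
  (x 0 i - y 0 i) * g i <= M * (lam^-1 * `|y 0 i| + `|x 0 i|).
Proof.
move=> yB zgM M0.
have yg_le : - (y 0 i * g i) <= `|y 0 i| * `|g i|.
  by rewrite -normrM -normrN ler_norm.
have xg_le : x 0 i * g i <= `|x 0 i| * `|g i| by rewrite -normrM ler_norm.
have lamV_ge1 : 1 <= lam^-1 by rewrite invf_ge1.
move: zgM; rewrite /zeta; case: eqP => [-> | _].
  move=> lam_gM; have gM : `|g i| <= M * lam^-1 by rewrite ler_pdivlMr // mulrC.
  have := ler_wpM2l (normr_ge0 (y 0 i)) gM; rewrite normr0; nra.
case: ifP => [/andP[Bx xg_lt0] _ | _]; last first.
  rewrite mul1r => gM.
  have := ler_wpM2l (normr_ge0 (y 0 i)) gM.
  have := ler_wpM2l (normr_ge0 (x 0 i)) gM.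
  have := ler_wpM2l M0 (ler_peMl (normr_ge0 (y 0 i)) lamV_ge1); nra.
(* weight 0: the summand is nonpositive *)
have yx : `|y 0 i| * `|g i| <= `|x 0 i| * `|g i|.
  by apply: ler_wpM2r => //; exact: le_trans Bx.
have xg : `|x 0 i| * `|g i| = - (x 0 i * g i) by rewrite -normrM mulrC ltr0_norm.
have : 0 <= M * (lam^-1 * `|y 0 i| + `|x 0 i|).
  by rewrite mulr_ge0 // addr_ge0 // mulr_ge0 // (le_trans ler01).
nra.
Qed.

End ZetaWeights.

Lemma div_le_of_le_mul (R : realFieldType) (a b c : R) :
  0 <= b -> 0 <= c -> a <= b * c -> a / c <= b.
Proof.
move=> b0 c0 abc; have [->|c_neq0] := eqVneq c 0; first by rewrite invr0 mulr0.
by rewrite ler_pdivrMr // lt_def c_neq0.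
Qed.

Theorem lemma4 (R : realType) (n : nat) (f : 'rV[R]_n -> R)
  (f_diff : forall y : 'rV[R]_n, differentiable f y)
  (f_cvx : convex_function [set: 'rV[R]_n] f)
  (B B' lam : R) (x xs : 'rV[R]_n)
  (hB : 0 < B) (hBB' : B <= B')
  (hx : forall i, `|x 0 i| <= B')
  (hxs : forall i, `|xs 0 i| <= B)
  (hlam0 : 0 < lam) (hlam1 : lam <= 1)
  (istar : 'I_n)
  (histar : forall j : 'I_n,
     zeta B lam f x j * `|grad_i f x j| <= zeta B lam f x istar * `|grad_i f x istar|) :
  `|grad_i f x istar| >= (f x - f xs) / (l1norm xs + lam * l1norm x)
  \/ (`|grad_i f x istar| >= (f x - f xs) / (lam^-1 * l1norm xs + l1norm x)
      /\ x 0 istar != 0).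
Proof.
set g := grad_i f x; set M := zeta B lam f x istar * `|g istar|.
have M_ge0 : 0 <= M by rewrite mulr_ge0 ?zeta_ge0.
have denom_ge0 : 0 <= lam^-1 * l1norm xs + l1norm x.
  by rewrite addr_ge0 ?l1norm_ge0 // mulr_ge0 ?l1norm_ge0 // invr_ge0 ltW.
have gap_le : f x - f xs <= M * (lam^-1 * l1norm xs + l1norm x).
  apply: le_trans (convex_gap_le_grad_sum f_cvx xs (f_diff x)) _.
  rewrite /l1norm mulr_sumr -big_split mulr_sumr.
  by apply: ler_sum => i _; exact: zeta_grad_term_le.
have [x_istar0 | x_istar_neq0] := eqVneq (x 0 istar) 0.
  left; apply: div_le_of_le_mul => //.
    by rewrite addr_ge0 ?l1norm_ge0 // mulr_ge0 ?l1norm_ge0 // ltW.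
  suff -> : `|g istar| * (l1norm xs + lam * l1norm x)
          = M * (lam^-1 * l1norm xs + l1norm x) by [].
  by rewrite /M /zeta x_istar0 eqxx; field; rewrite gt_eqF.
right; split => //; apply: div_le_of_le_mul => //.
apply: le_trans gap_le _; apply: ler_wpM2r => //.
by rewrite /M ler_piMl // zeta_le1.
Qed.
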